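(* Let $G=(V,E)$ be a $k$-uniform hypergraph with $k\ge 3$. Let $U$ be a supervertex of $G$ with degree $d$ and $|U|\ge 2$. Let $\lambda\neq d$ be a Laplacian H-eigenvalue of $G$ and $\mathbf{x}$ a corresponding Laplacian H-eigenvector. Then for all $i,j\in U$ we have $|x_i|=|x_j|$; if moreover $k$ is odd, then $x_i=x_j$.
   Context: A $k$-uniform hypergraph $G=(V,E)$ has vertex set $V=[n]$ and a set $E$ of $k$-element subsets of $V$. For $i\in V$, $E_i$ is the set of edges containing $i$ and $d_i=|E_i|$ is its degree. For $i\in V$, the set $U=\{j\in V: E_j=E_i\}$ is called a supervertex; all its vertices have the same degree, called the degree of the supervertex. A Laplacian H-eigenvalue of $G$ is a real $\lambda$ for which there exists $\mathbf{x}\in\mathbb{R}^n\setminus\{0\}$ (a Laplacian H-eigenvector) with $\lambda x_i^{k-1}=d_ix_i^{k-1}-\sum_{e\in E_i}\prod_{j\in e\setminus\{i\}}x_j$ for all $i\in[n]$; equivalently, an H-eigenvalue of the Laplacian tensor $\mathcal{L}=\mathcal{D}-\mathcal{A}$, where $\mathcal{A}$ has entries $1/(k-1)!$ at $(i_1,\ldots,i_k)$ with $\{i_1,\ldots,i_k\}\in E$ and $0$ otherwise, and $\mathcal{D}$ is diagonal with entries $d_i$. *)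

From HB Require Import structures.
From mathcomp Require Import all_boot all_order all_algebra.
Set Implicit Arguments. Unset Strict Implicit. Unset Printing Implicit Defensive.
Import Order.TTheory GRing.Theory Num.Theory.
Local Open Scope ring_scope.

Definition uniform (n k : nat) (E : {set {set 'I_n}}) : Prop :=
  forall e, e \in E -> #|e| = k.

Definition edges_at (n : nat) (E : {set {set 'I_n}}) (i : 'I_n) : {set {set 'I_n}} :=
  [set e in E | i \in e].

Definition deg (n : nat) (E : {set {set 'I_n}}) (i : 'I_n) : nat := #|edges_at E i|.

Definition supervertex (n : nat) (E : {set {set 'I_n}}) (i : 'I_n) : {set 'I_n} :=
  [set j | edges_at E j == edges_at E i].

Definition lap_H_eigenpair (R : realFieldType) (n k : nat) (E : {set {set 'I_n}})
    (lambda : R) (x : 'I_n -> R) : Prop :=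
  (exists i, x i != 0) /\
  forall i : 'I_n,
    lambda * x i ^+ k.-1 =
      (deg E i)%:R * x i ^+ k.-1 - \sum_(e in edges_at E i) \prod_(j in e :\ i) x j.

(* For a vertex i, multiplying the eigenequation at i by x_i turns every
   product over e \ {i} into the product over the whole edge e, so
   (lambda - d_i) x_i^k = - sum_{e in E_i} prod_{j in e} x_j depends on i only
   through E_i.  On a supervertex the right-hand side is constant, and
   lambda != d lets us cancel the factor: x_i^k = x_j^k.  Equal k-th powers
   have equal absolute values, and are equal outright when k is odd. *)

From HB Require Import structures.
From mathcomp Require Import all_boot all_order all_algebra.
Set Implicit Arguments. Unset Strict Implicit. Unset Printing Implicit Defensive.
Import Order.TTheory GRing.Theory Num.Theory.
Local Open Scope ring_scope.

Lemma eq_exprn_norm (R : realDomainType) (k : nat) (a b : R) :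
  (0 < k)%N -> a ^+ k = b ^+ k -> `|a| = `|b|.
Proof.
by move=> k_gt0 eq_ab; apply/eqP; rewrite -(eqrXn2 k_gt0) // -!normrX eq_ab.
Qed.

Lemma eq_exprn_odd (R : realDomainType) (k : nat) (a b : R) :
  odd k -> a ^+ k = b ^+ k -> a = b.
Proof.
move=> k_odd eq_ab; have k_gt0 : (0 < k)%N by case: k k_odd eq_ab.
have same_sign : (0 <= a) = (0 <= b).
  by rewrite -(exprn_odd_ge0 a k_odd) -(exprn_odd_ge0 b k_odd) eq_ab.
have := eq_exprn_norm k_gt0 eq_ab.
have [a_ge0 | a_lt0] := leP 0 a.
  by rewrite !ger0_norm // -same_sign.
have b_lt0 : b < 0 by rewrite ltNge -same_sign -ltNge.
by rewrite !ltr0_norm // => /oppr_inj.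
Qed.

Lemma edges_at_supervertex (n : nat) (E : {set {set 'I_n}}) (i j : 'I_n) :
  j \in supervertex E i -> edges_at E j = edges_at E i.
Proof. by rewrite inE => /eqP. Qed.

Lemma lap_H_eigen_exprn (R : realFieldType) (n k : nat) (E : {set {set 'I_n}})
    (lambda : R) (x : 'I_n -> R) (i : 'I_n) :
  (0 < k)%N -> lap_H_eigenpair k E lambda x ->
  (lambda - (deg E i)%:R) * x i ^+ k =
    - \sum_(e in edges_at E i) \prod_(j in e) x j.
Proof.
move=> k_gt0 [_ eigen].
rewrite -(prednK k_gt0) exprS mulrCA mulrBl eigen addrAC subrr add0r.
rewrite mulrN mulr_sumr; congr (- _); apply: eq_bigr => e.
by rewrite inE => /andP[_ i_in_e]; rewrite [RHS](big_setD1 i).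
Qed.

Theorem theorem6p1 (R : realFieldType) (n k : nat) (E : {set {set 'I_n}})
    (i0 : 'I_n) (U : {set 'I_n}) (d : nat) (lambda : R) (x : 'I_n -> R) :
  (3 <= k)%N ->
  uniform k E ->
  U = supervertex E i0 ->
  d = deg E i0 ->
  (2 <= #|U|)%N ->
  lambda != d%:R ->
  lap_H_eigenpair k E lambda x ->
  forall i j, i \in U -> j \in U ->
    `|x i| = `|x j| /\ (odd k -> x i = x j).
Proof.
move=> k_ge3 _ -> -> _ lambda_neq_d eigen.
have k_gt0 : (0 < k)%N by apply: leq_trans k_ge3.
have exprn_on_U l : l \in supervertex E i0 ->
    (lambda - (deg E i0)%:R) * x l ^+ k =
      - \sum_(e in edges_at E i0) \prod_(j in e) x j.
  move=> /edges_at_supervertex E_l.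
  by have := lap_H_eigen_exprn l k_gt0 eigen; rewrite /deg E_l.
move=> i j iU jU.
have eq_pow : x i ^+ k = x j ^+ k.
  apply: (mulfI (x := lambda - (deg E i0)%:R)); first by rewrite subr_eq0.
  by rewrite !exprn_on_U.
split; first exact: eq_exprn_norm eq_pow.
by move=> k_odd; apply: eq_exprn_odd eq_pow.
Qed.
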